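(* Under the hypotheses of the sequential gradient descent setting (see context), $\sum_{k=1}^\infty\gamma_k^2\|\nabla J_k(x_k)\|^2<\infty$.
   Context: $Q\in\mathbb{R}^{n\times n}$ symmetric positive semidefinite, $q\in\mathbb{R}^n$, $A\in\mathbb{R}^{n\times n}$ symmetric positive definite, $v\in\mathbb{R}^n$. $f(x)=\tfrac12 x^\top Qx+q^\top x$, $g(x)=(x-v)^\top A(x-v)$, $\mathcal{C}=\{x:g(x)\le1\}$, $\partial\mathcal{C}=\{x:g(x)=1\}$, $J_k(x)=f(x)+\frac{m}{k}g(x)^k$, $L_k=\bar\sigma(Q+m(4k-2)A)$, $r=\sqrt{\underline\sigma(A)}/\bar\sigma(A)$ ($\bar\sigma,\underline\sigma$ largest/smallest singular value). Setting: $m>0$ satisfies Requirement 2, namely with $w(x)=\nabla f(x)+m\nabla g(x)$, $\|w(x)\|^2\|\nabla g(x)\|\le 2rL_1\langle w(x),\nabla g(x)\rangle$ for all $x\in\partial\mathcal{C}$; $x_1\in\mathcal{C}$; $x_{k+1}=x_k-\gamma_k\nabla J_k(x_k)$ with $0<\gamma_k\le1/L_k$, $\sum_k\gamma_k^2<\infty$, $\sum_k\gamma_k=\infty$. *)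

From HB Require Import structures.
From mathcomp Require Import all_boot all_order all_algebra.
From mathcomp Require Import all_classical all_reals all_analysis.
Set Implicit Arguments. Unset Strict Implicit. Unset Printing Implicit Defensive.
Import Order.TTheory GRing.Theory Num.Theory.
Local Open Scope ring_scope.
Local Open Scope classical_set_scope.

Section Defs.
Variables (R : realType) (n : nat).

Definition dotv (x y : 'cV[R]_n) : R := (x^T *m y) 0 0.
Definition normv (x : 'cV[R]_n) : R := Num.sqrt (dotv x x).

Definition sigma_max (M : 'M[R]_n) : R :=
  sup [set normv (M *m x) | x in [set x : 'cV[R]_n | normv x = 1]].
Definition sigma_min (M : 'M[R]_n) : R :=
  inf [set normv (M *m x) | x in [set x : 'cV[R]_n | normv x = 1]].

Definition sym_psd (M : 'M[R]_n) : Prop :=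
  M^T = M /\ forall x : 'cV[R]_n, 0 <= dotv x (M *m x).
Definition sym_pd (M : 'M[R]_n) : Prop :=
  M^T = M /\ forall x : 'cV[R]_n, x != 0 -> 0 < dotv x (M *m x).

Variables (Q : 'M[R]_n) (q : 'cV[R]_n) (A : 'M[R]_n) (v : 'cV[R]_n) (m : R).

Definition f_obj (x : 'cV[R]_n) : R := 2^-1 * dotv x (Q *m x) + dotv q x.
Definition g_con (x : 'cV[R]_n) : R := dotv (x - v) (A *m (x - v)).
Definition J (k : nat) (x : 'cV[R]_n) : R := f_obj x + m / k%:R * g_con x ^+ k.

(* gradients, computed explicitly (the functions are explicit polynomials) *)
Definition grad_f (x : 'cV[R]_n) : 'cV[R]_n := Q *m x + q.
Definition grad_g (x : 'cV[R]_n) : 'cV[R]_n := 2%:R *: (A *m (x - v)).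
(* for k >= 1 : grad J_k = grad f + m g^(k-1) grad g *)
Definition grad_J (k : nat) (x : 'cV[R]_n) : 'cV[R]_n :=
  grad_f x + (m * g_con x ^+ k.-1) *: grad_g x.

Definition Lk (k : nat) : R := sigma_max (Q + (m * (4 * k%:R - 2)) *: A).
Definition r_const : R := Num.sqrt (sigma_min A) / sigma_max A.

Definition w_vec (x : 'cV[R]_n) : 'cV[R]_n := grad_f x + m *: grad_g x.

Definition requirement2 : Prop :=
  forall x : 'cV[R]_n, g_con x = 1 ->
    normv (w_vec x) ^+ 2 * normv (grad_g x)
      <= 2 * r_const * Lk 1 * dotv (w_vec x) (grad_g x).

End Defs.

From HB Require Import structures.
From mathcomp Require Import all_boot all_order all_algebra.
From mathcomp Require Import all_classical all_reals all_analysis.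
From mathcomp Require Import ring lra.
Import Order.TTheory GRing.Theory Num.Theory.
Local Open Scope ring_scope.
Local Open Scope classical_set_scope.

(* The iterates never leave the ellipsoid C.  For x in C and y = x - gam grad J_k(x),
   let z be the point where the ray from x along a = A (y - v) leaves C.  Because
   gam <= 1/L_k, the step map is monotone along a between x and z (the term 4k - 2
   of L_k pays for the growth of g^(k-1)), and by Requirement 2 the step taken from the
   boundary point z stays in C; Cauchy-Schwarz for the inner product of A then yields
   g(y) <= 1.  On C all the gradients grad J_k are bounded by one constant B, so the
   series is dominated by B^2 * sum gamma_k^2. *)

Section RealFacts.
Context {R : realType}.
Implicit Types a b : R.

Lemma sqrtr_le a b : 0 <= b -> a <= b ^+ 2 -> Num.sqrt a <= b.
Proof. by move=> b0 ab; rewrite -(ger0_norm b0) -sqrtr_sqr ler_wsqrtr. Qed.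

Lemma ler_of_sqr a b : 0 <= b -> a ^+ 2 <= b ^+ 2 -> a <= b.
Proof.
by move=> b0 ab; apply: le_trans (ler_norm a) _; rewrite -sqrtr_sqr sqrtr_le.
Qed.

Lemma mulr_le1_of_le_inv a b : 0 <= b -> a <= b^-1 -> a * b <= 1.
Proof.
move=> b0 ab; have [->|bn0] := eqVneq b 0; first by rewrite mulr0 ler01.
by rewrite -ler_pdivlMr ?div1r // lt_def bn0 b0.
Qed.

Lemma bernoulli_ineq (t : R) (j : nat) : 0 <= t <= 1 -> 1 - t ^+ j <= j%:R * (1 - t).
Proof.
move=> /andP[t0 t1]; elim: j => [|j IH]; first by rewrite expr0 subrr mul0r.
have tj0 : 0 <= t ^+ j by rewrite exprn_ge0.
have tj1 : t ^+ j <= 1 by rewrite exprn_ile1.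
rewrite exprS -natr1; nra.
Qed.

(* [t |-> G0 + 2 t b + t^2 al] is [g] along a line from a point of [C], which
   leaves [C] at [t = s]; [b^2 <= al G0] is Cauchy-Schwarz for [A]. *)
Lemma chord_onemX_le (G0 al s b : R) (j : nat) :
  0 <= G0 <= 1 -> 0 <= al -> 0 <= s -> b ^+ 2 <= al * G0 ->
  G0 + 2 * s * b + s ^+ 2 * al = 1 ->
  b * (1 - G0 ^+ j) <= 2 * j%:R * al * s.
Proof.
move=> G01 al0 s0 b_le G0_s.
have [b_le0|b_gt0] := lerP b 0.
  apply: le_trans (_ : 0 <= _); last by rewrite !mulr_ge0.
  by rewrite mulr_le0_ge0 // subr_ge0 exprn_ile1 //; case/andP: G01.
have oneB : 1 - G0 = s * (2 * b + s * al) by rewrite -{1}G0_s; ring.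
have tangent : b * (2 * b + s * al) <= 2 * al by nra.
have := bernoulli_ineq G0 j G01; rewrite oneB => bern.
apply: le_trans (ler_wpM2l (ltW b_gt0) bern) _.
have -> : b * (j%:R * (s * (2 * b + s * al))) = j%:R * s * (b * (2 * b + s * al)).
  by ring.
have -> : 2 * j%:R * al * s = j%:R * s * (2 * al) by ring.
by rewrite ler_wpM2l ?mulr_ge0.
Qed.

End RealFacts.

Section Euclid.
Context {R : realType} {n : nat}.
Implicit Types (x y z : 'cV[R]_n) (M : 'M[R]_n).

Lemma dotvE x y : dotv x y = \sum_i x i 0 * y i 0.
Proof. by rewrite /dotv !mxE; apply: eq_bigr => i _; rewrite mxE. Qed.

Lemma dotvC x y : dotv x y = dotv y x.
Proof. by rewrite !dotvE; apply: eq_bigr => i _; rewrite mulrC. Qed.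

Lemma dotvDl x y z : dotv (x + y) z = dotv x z + dotv y z.
Proof. by rewrite !dotvE -big_split; apply: eq_bigr => i _; rewrite !mxE mulrDl. Qed.

Lemma dotvDr x y z : dotv z (x + y) = dotv z x + dotv z y.
Proof. by rewrite dotvC dotvDl !(dotvC z). Qed.

Lemma dotvZl a x y : dotv (a *: x) y = a * dotv x y.
Proof. by rewrite !dotvE mulr_sumr; apply: eq_bigr => i _; rewrite !mxE mulrA. Qed.

Lemma dotvZr a x y : dotv x (a *: y) = a * dotv x y.
Proof. by rewrite dotvC dotvZl dotvC. Qed.

Lemma dotvNl x y : dotv (- x) y = - dotv x y.
Proof. by rewrite -scaleN1r dotvZl mulN1r. Qed.

Lemma dotvNr x y : dotv x (- y) = - dotv x y.
Proof. by rewrite dotvC dotvNl dotvC. Qed.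

Lemma dotvBr x y z : dotv z (x - y) = dotv z x - dotv z y.
Proof. by rewrite dotvDr dotvNr. Qed.

Lemma dotv0l x : dotv 0 x = 0.
Proof. by rewrite -(scale0r 0) dotvZl mul0r. Qed.

Lemma dotv0r x : dotv x 0 = 0.
Proof. by rewrite dotvC dotv0l. Qed.

Lemma dotv_ge0 x : 0 <= dotv x x.
Proof. by rewrite dotvE; apply: sumr_ge0 => i _; rewrite -expr2 sqr_ge0. Qed.

Lemma dotv_eq0 x : dotv x x = 0 -> x = 0.
Proof.
rewrite dotvE => /eqP; rewrite psumr_eq0 => [/allP x0|i _]; last first.
  by rewrite -expr2 sqr_ge0.
apply/matrixP => i j; rewrite (ord1 j) !mxE.
by have /implyP := x0 i (mem_index_enum i); rewrite mulf_eq0 orbb => /(_ isT)/eqP.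
Qed.

Lemma dotv_mulmx x M y : dotv x (M *m y) = dotv (M^T *m x) y.
Proof. by rewrite /dotv trmx_mul trmxK mulmxA. Qed.

Lemma dotv_mulmx_sym M x y : M^T = M -> dotv x (M *m y) = dotv y (M *m x).
Proof. by move=> MT; rewrite dotv_mulmx MT dotvC. Qed.

Lemma dotv_mulmx_addZ M N c x y :
  dotv x ((M + c *: N) *m y) = dotv x (M *m y) + c * dotv x (N *m y).
Proof. by rewrite mulmxDl dotvDr -scalemxAl dotvZr. Qed.

Lemma sym_pd_psd M : sym_pd M -> sym_psd M.
Proof.
case=> MT M_pd; split=> // x; have [->|x0] := eqVneq x 0; first by rewrite dotv0l.
exact/ltW/M_pd.
Qed.

Lemma form_CauchySchwarz M x y : sym_psd M ->
  dotv x (M *m y) ^+ 2 <= dotv x (M *m x) * dotv y (M *m y).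
Proof.
case=> MT M_psd.
set P := dotv x (M *m x); set B := dotv x (M *m y); set C := dotv y (M *m y).
have quad t : 0 <= P + 2 * t * B + t ^+ 2 * C.
  have := M_psd (x + t *: y).
  rewrite mulmxDr dotvDl !dotvDr -!scalemxAr !dotvZl !dotvZr.
  rewrite (dotv_mulmx_sym M y x MT) -/P -/B -/C; lra.
have C0 : 0 <= C by apply: M_psd.
have [C_eq0|C_neq0] := eqVneq C 0.
  have [->|B_neq0] := eqVneq B 0; first by rewrite C_eq0 expr0n mulr0.
  have := quad (- (P + 1) / (2 * B)); rewrite C_eq0 mulr0 addr0.
  have -> : 2 * (- (P + 1) / (2 * B)) * B = - (P + 1) by field.
  lra.
have C_gt0 : 0 < C by rewrite lt_def C_neq0 C0.
have := quad (- B / C).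
have -> : P + 2 * (- B / C) * B + (- B / C) ^+ 2 * C = P - B ^+ 2 / C by field.
by rewrite subr_ge0 ler_pdivrMr.
Qed.

Lemma dotv_CauchySchwarz x y : dotv x y ^+ 2 <= dotv x x * dotv y y.
Proof.
have id_psd : sym_psd (1%:M : 'M[R]_n).
  by split=> [|z]; rewrite ?trmx1 // mul1mx dotv_ge0.
by have := form_CauchySchwarz _ x y id_psd; rewrite !mul1mx.
Qed.

Lemma normv_ge0 x : 0 <= normv x.
Proof. exact: sqrtr_ge0. Qed.

Lemma normv_sqr x : normv x ^+ 2 = dotv x x.
Proof. by rewrite sqr_sqrtr // dotv_ge0. Qed.

Lemma normv_eq0 x : normv x = 0 -> x = 0.
Proof. by move=> x0; apply: dotv_eq0; rewrite -normv_sqr x0 expr0n. Qed.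

Lemma normv_gt0 x : x != 0 -> 0 < normv x.
Proof.
by move=> x0; rewrite lt_def normv_ge0 andbT; apply: contra_neq x0 => /normv_eq0.
Qed.

Lemma normv0 : normv (0 : 'cV[R]_n) = 0.
Proof. by rewrite /normv dotv0l sqrtr0. Qed.

Lemma normvZ a x : normv (a *: x) = `|a| * normv x.
Proof. by rewrite /normv dotvZl dotvZr mulrA -expr2 sqrtrM ?sqr_ge0 // sqrtr_sqr. Qed.

Lemma normv_unit x : x != 0 -> normv ((normv x)^-1 *: x) = 1.
Proof.
move=> x0; have x_gt0 := normv_gt0 x x0.
by rewrite normvZ ger0_norm ?invr_ge0 ?ltW // mulVf ?gt_eqF.
Qed.

Lemma dotv_le_normvM x y : dotv x y <= normv x * normv y.
Proof.
apply: ler_of_sqr; first by rewrite mulr_ge0 ?normv_ge0.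
by rewrite exprMn !normv_sqr dotv_CauchySchwarz.
Qed.

Lemma normvD x y : normv (x + y) <= normv x + normv y.
Proof.
apply: ler_of_sqr; first by rewrite addr_ge0 ?normv_ge0.
rewrite normv_sqr dotvDl !dotvDr (dotvC y x) sqrrD -!normv_sqr.
have := dotv_le_normvM x y; lra.
Qed.

End Euclid.

Section SingularValues.
Context {R : realType} {n : nat}.
Implicit Types (x y : 'cV[R]_n) (M : 'M[R]_n).

Local Notation unit_image M :=
  [set normv (M *m x) | x in [set x : 'cV[R]_n | normv x = 1]].

Lemma unit_image_ubound M : has_ubound (unit_image M).
Proof.
exists (Num.sqrt (\sum_i dotv (row i M)^T (row i M)^T)) => _ [x /= x1 <-].
rewrite ler_wsqrtr // dotvE; apply: ler_sum => i _.
have xx1 : dotv x x = 1 by rewrite -normv_sqr x1 expr1n.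
have -> : (M *m x) i 0 = dotv (row i M)^T x.
  by rewrite dotvE !mxE; apply: eq_bigr => j _; rewrite !mxE.
by rewrite -expr2 -[X in _ <= X]mulr1 -xx1 dotv_CauchySchwarz.
Qed.

Lemma sigma_max_ub M x : normv x = 1 -> normv (M *m x) <= sigma_max M.
Proof.
move=> x1; apply: sup_upper_bound; last by exists x.
by split; [exists (normv (M *m x)), x | exact: unit_image_ubound].
Qed.

(* This is the case [n = 0]: the supremum of the empty set. *)
Lemma sigma_max_no_unit M : ~ (exists x : 'cV[R]_n, normv x = 1) -> sigma_max M = 0.
Proof.
move=> no_unit; rewrite /sigma_max; have -> : unit_image M = set0; last exact: sup0.
by apply/seteqP; split => // y [x x1 _]; apply: no_unit; exists x.
Qed.

Lemma sigma_max_ge0 M : 0 <= sigma_max M.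
Proof.
have [[x x1]|no_unit] := pselect (exists x : 'cV[R]_n, normv x = 1).
  exact: le_trans (normv_ge0 _) (sigma_max_ub M x x1).
by rewrite sigma_max_no_unit.
Qed.

Lemma sigma_max_le M b : 0 <= b ->
  (forall x, normv x = 1 -> normv (M *m x) <= b) -> sigma_max M <= b.
Proof.
move=> b0 Mb; have [[x x1]|no_unit] := pselect (exists x : 'cV[R]_n, normv x = 1).
  by apply: ge_sup; [exists (normv (M *m x)), x | move=> _ [y /= y1 <-]; apply: Mb].
by rewrite sigma_max_no_unit.
Qed.

Lemma normv_mulmx_le M x : normv (M *m x) <= sigma_max M * normv x.
Proof.
have [->|x0] := eqVneq x 0; first by rewrite mulmx0 normv0 mulr0.
have := sigma_max_ub M _ (normv_unit x x0).
rewrite -scalemxAr normvZ ger0_norm ?invr_ge0 ?normv_ge0 //.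
by rewrite mulrC ler_pdivrMr ?normv_gt0.
Qed.

Lemma sigma_min_le M x : sigma_min M * normv x <= normv (M *m x).
Proof.
have [->|x0] := eqVneq x 0; first by rewrite mulmx0 normv0 mulr0.
have : sigma_min M <= normv (M *m ((normv x)^-1 *: x)).
  apply: ge_inf; first by exists 0 => _ [y _ <-]; apply: normv_ge0.
  by exists ((normv x)^-1 *: x); first exact: normv_unit.
rewrite -scalemxAr normvZ ger0_norm ?invr_ge0 ?normv_ge0 //.
by rewrite mulrC ler_pdivlMr ?normv_gt0.
Qed.

Lemma dotv_mulmx_le M x : dotv x (M *m x) <= sigma_max M * dotv x x.
Proof.
apply: le_trans (dotv_le_normvM _ _) _; rewrite -normv_sqr expr2.
have := normv_mulmx_le M x; have := normv_ge0 x; nra.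
Qed.

(* Cauchy-Schwarz for the form of [M], applied to [x] and [M x]. *)
Lemma psd_normv_mulmx_sqr M x : sym_psd M ->
  normv (M *m x) ^+ 2 <= sigma_max M * dotv x (M *m x).
Proof.
move=> M_psd; have [MT M_ge0] := M_psd.
set N := normv (M *m x) ^+ 2; set P := dotv x (M *m x); set s := sigma_max M.
have N_form : N = dotv x (M *m (M *m x)) by rewrite /N normv_sqr [RHS]dotv_mulmx MT.
have CS := form_CauchySchwarz M x (M *m x) M_psd; rewrite -N_form in CS.
have MMx : dotv (M *m x) (M *m (M *m x)) <= s * N by rewrite /N normv_sqr dotv_mulmx_le.
have N0 : 0 <= N by rewrite sqr_ge0.
have s0 : 0 <= s := sigma_max_ge0 M.
have P0 : 0 <= P := M_ge0 x.
have {CS MMx} : N ^+ 2 <= P * (s * N) by apply: le_trans CS _; rewrite ler_wpM2l.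
have [-> _|N_neq0] := eqVneq N 0; first by rewrite mulr_ge0.
have : 0 < N by rewrite lt_def N_neq0 N0.
rewrite expr2; nra.
Qed.

Lemma sigma_max_addZ_mono (P M : 'M[R]_n) c1 c2 : sym_psd P -> sym_psd M ->
  0 <= c1 <= c2 -> sigma_max (P + c1 *: M) <= sigma_max (P + c2 *: M).
Proof.
move=> [PT P_ge0] [MT M_ge0] /andP[c1_ge0 c12].
have psd1 : sym_psd (P + c1 *: M).
  split; first by rewrite linearD /= linearZ /= PT MT.
  by move=> x; rewrite dotv_mulmx_addZ addr_ge0 ?mulr_ge0.
set s1 := sigma_max (P + c1 *: M); set s2 := sigma_max (P + c2 *: M).
have s1_ge0 : 0 <= s1 := sigma_max_ge0 _.
have s2_ge0 : 0 <= s2 := sigma_max_ge0 _.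
have s1_le : s1 <= Num.sqrt (s1 * s2).
  apply: sigma_max_le => [|x x1]; first exact: sqrtr_ge0.
  apply: ler_of_sqr; first exact: sqrtr_ge0.
  rewrite [X in _ <= X]sqr_sqrtr ?mulr_ge0 //.
  apply: le_trans (psd_normv_mulmx_sqr _ x psd1) _.
  rewrite ler_wpM2l //; apply: le_trans (_ : dotv x ((P + c2 *: M) *m x) <= _).
    by rewrite !dotv_mulmx_addZ lerD2l ler_wpM2r.
  by have := dotv_mulmx_le (P + c2 *: M) x; rewrite -normv_sqr x1 expr1n mulr1.
have : s1 ^+ 2 <= s1 * s2.
  rewrite -[X in _ <= X]sqr_sqrtr ?mulr_ge0 //.
  by rewrite ler_sqr ?nnegrE ?sqrtr_ge0.
rewrite expr2 => s1_sqr; have [->|s1_neq0] := eqVneq s1 0; first by [].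
have : 0 < s1 by rewrite lt_def s1_neq0 s1_ge0.
nra.
Qed.

End SingularValues.

Section Series.
Context {R : realType}.

Lemma sum_nondecreasing (u : R ^nat) N0 : (forall k, (N0 <= k)%N -> 0 <= u k) ->
  nondecreasing_seq (fun N => \sum_(N0 <= k < N) u k).
Proof.
move=> u_ge0; apply/nondecreasing_seqP => N.
have [N0N|NN0] := leqP N0 N; first by rewrite big_nat_recr //= lerDl u_ge0.
by rewrite !big_geq // ltnW.
Qed.

Lemma is_cvg_sum_le {u w : R ^nat} {c : R} {N0 : nat} : 0 <= c ->
  (forall k, (N0 <= k)%N -> 0 <= u k /\ u k <= c * w k) ->
  (forall k, (N0 <= k)%N -> 0 <= w k) ->
  cvgn (fun N => \sum_(N0 <= k < N) w k) -> cvgn (fun N => \sum_(N0 <= k < N) u k).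
Proof.
move=> c0 uw w_ge0 w_cvg.
apply: nondecreasing_is_cvgn; first by apply: sum_nondecreasing => k /uw[].
exists (c * limn (fun N => \sum_(N0 <= k < N) w k)) => _ [N _ <-].
apply: le_trans (_ : c * \sum_(N0 <= k < N) w k <= _).
  rewrite mulr_sumr big_nat_cond [X in _ <= X]big_nat_cond.
  by apply: ler_sum => k /andP[/andP[/uw[]]].
by rewrite ler_wpM2l //; apply: nondecreasing_cvgn_le => //; apply: sum_nondecreasing.
Qed.

End Series.

Section Descent.
Context {R : realType} {n : nat} {Q : 'M[R]_n} {q : 'cV[R]_n} {A : 'M[R]_n}
  {v : 'cV[R]_n} {m : R}.
Hypotheses (Q_psd : sym_psd Q) (A_pd : sym_pd A) (m_gt0 : 0 < m).
Implicit Types (x y z a : 'cV[R]_n).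

Local Notation g := (g_con A v).
Local Notation gradJ := (grad_J Q q A v m).
Local Notation w := (w_vec Q q A v m).
Local Notation L := (Lk Q A m).

Definition descent_step k gam y := y - gam *: gradJ k y.

Let A_psd : sym_psd A := sym_pd_psd A A_pd.
Let A_sym : A^T = A := A_psd.1.

Lemma g_con_ge0 x : 0 <= g x.
Proof. exact: A_psd.2. Qed.

Lemma g_con_addZ x a s :
  g (x + s *: a) = g x + 2 * s * dotv a (A *m (x - v)) + s ^+ 2 * dotv a (A *m a).
Proof.
rewrite /g_con (_ : x + s *: a - v = (x - v) + s *: a); last by rewrite addrAC.
move: (x - v) => d; rewrite mulmxDr !dotvDl !dotvDr -!scalemxAr !dotvZl !dotvZr.
by rewrite (dotv_mulmx_sym A d a A_sym); ring.
Qed.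

Lemma dotv_grad_J a k y : dotv a (gradJ k y) =
  dotv a (Q *m y) + dotv a q + 2 * m * g y ^+ k.-1 * dotv a (A *m (y - v)).
Proof. by rewrite /grad_J /grad_f /grad_g !dotvDr !dotvZr; ring. Qed.

Lemma exists_boundary_point x a : g x <= 1 -> a != 0 ->
  exists2 s, 0 <= s & g (x + s *: a) = 1.
Proof.
move=> gx1 a0; have al_gt0 : 0 < dotv a (A *m a) by apply: A_pd.2.
set al := dotv a (A *m a); set b := dotv a (A *m (x - v)).
set D := b ^+ 2 + al * (1 - g x).
have bD : b ^+ 2 <= D by rewrite /D lerDl mulr_ge0 ?subr_ge0 // ltW.
have S_sqr : Num.sqrt D ^+ 2 = D by rewrite sqr_sqrtr // (le_trans (sqr_ge0 b)).
have b_le_S : b <= Num.sqrt D.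
  by apply: le_trans (ler_norm b) _; rewrite -sqrtr_sqr ler_wsqrtr.
exists ((Num.sqrt D - b) / al); first by rewrite divr_ge0 ?subr_ge0 // ltW.
rewrite g_con_addZ -/al -/b.
have -> : g x + 2 * ((Num.sqrt D - b) / al) * b + ((Num.sqrt D - b) / al) ^+ 2 * al
    = g x + (Num.sqrt D ^+ 2 - b ^+ 2) / al by field; rewrite gt_eqF.
by rewrite S_sqr /D addrAC subrr add0r mulrAC divff ?gt_eqF // mul1r addrC subrK.
Qed.

Lemma dotv_grad_J_incr k x a s : (1 <= k)%N -> g x <= 1 -> 0 <= s ->
  g (x + s *: a) = 1 ->
  dotv a (gradJ k (x + s *: a) - gradJ k x) <= s * (L k * dotv a a).
Proof.
case: k => [//|j] _ gx1 s0 gz1.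
set al := dotv a (A *m a); set b := dotv a (A *m (x - v)).
set qa := dotv a (Q *m a).
have al0 : 0 <= al := A_psd.2 a.
have chord : b * (1 - g x ^+ j) <= 2 * j%:R * al * s.
  apply: chord_onemX_le => //; first by rewrite g_con_ge0.
    exact: form_CauchySchwarz.
  by move: gz1; rewrite g_con_addZ.
have L_bound : qa + m * (4 * j.+1%:R - 2) * al <= L j.+1 * dotv a a.
  by rewrite /qa /al -dotv_mulmx_addZ dotv_mulmx_le.
have Q_incr : dotv a (Q *m (x + s *: a)) = dotv a (Q *m x) + s * qa.
  by rewrite mulmxDr dotvDr -scalemxAr dotvZr.
have A_incr : dotv a (A *m (x + s *: a - v)) = b + s * al.
  by rewrite addrAC mulmxDr dotvDr -scalemxAr dotvZr.
rewrite dotvBr !dotv_grad_J gz1 expr1n Q_incr A_incr /=.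
apply: le_trans (ler_wpM2l s0 L_bound).
have -> : s * (qa + m * (4 * j.+1%:R - 2) * al)
    = s * qa + 2 * m * s * al + 2 * m * (2 * j%:R * al * s) by rewrite -natr1; ring.
have -> : dotv a (Q *m x) + s * qa + dotv a q + 2 * m * 1 * (b + s * al)
    - (dotv a (Q *m x) + dotv a q + 2 * m * g x ^+ j * b)
    = s * qa + 2 * m * s * al + 2 * m * (b * (1 - g x ^+ j)) by ring.
by rewrite lerD2l ler_wpM2l // mulr_ge0 // ltW.
Qed.

Lemma dotv_descent_step_mono k gam x a s : (1 <= k)%N -> 0 <= gam ->
  gam * L k <= 1 -> g x <= 1 -> 0 <= s -> g (x + s *: a) = 1 ->
  dotv a (descent_step k gam x) <= dotv a (descent_step k gam (x + s *: a)).
Proof.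
move=> k1 gam0 gamL gx1 s0 gz1.
have := dotv_grad_J_incr k x a s k1 gx1 s0 gz1; rewrite dotvBr => incr.
have saa : 0 <= s * dotv a a by rewrite mulr_ge0 ?dotv_ge0.
rewrite /descent_step !dotvBr dotvDr !dotvZr; nra.
Qed.

Lemma sqrt_sigma_min_le_normv z : g z = 1 ->
  Num.sqrt (sigma_min A) <= normv (A *m (z - v)).
Proof.
move=> gz1; apply: sqrtr_le; first exact: normv_ge0.
have Nd := sigma_min_le A (z - v).
have := dotv_le_normvM (z - v) (A *m (z - v)); rewrite [dotv _ _]gz1 => dN.
have [sm_le0|sm_gt0] := lerP (sigma_min A) 0; first exact: le_trans sm_le0 (sqr_ge0 _).
have := normv_ge0 (z - v); have := normv_ge0 (A *m (z - v)); nra.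
Qed.

Lemma r_constM_sigma_max_le : r_const A * sigma_max A <= Num.sqrt (sigma_min A).
Proof.
have [->|sA_neq0] := eqVneq (sigma_max A) 0; first by rewrite mulr0 sqrtr_ge0.
by rewrite /r_const mulfVK.
Qed.

(* Requirement 2, weakened by [sqrt (sigma_min A) <= |A (z - v)|] on the
   boundary, is exactly what keeps a short step from a boundary point in [C]. *)
Lemma requirement2_step_bound z gam : requirement2 Q q A v m -> g z = 1 ->
  0 <= gam -> gam * L 1 <= 1 ->
  gam * dotv (w z) (A *m w z) <= 2 * dotv (w z) (A *m (z - v)).
Proof.
move=> req gz1 gam0 gamL.
have [w0|w_neq0] := eqVneq (w z) 0; first by rewrite w0 !dotv0l mulr0.
have := req z gz1; rewrite /grad_g normvZ dotvZr ger0_norm //.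
set X := dotv (w z) (A *m (z - v)); set N := normv (A *m (z - v)).
set W := normv (w z); set sA := sigma_max A; set r := r_const A => req_z.
have N_gt0 : 0 < N.
  apply: normv_gt0; apply: contra_eq_neq gz1 => Ad0.
  by rewrite /g_con Ad0 dotv0r eq_sym oner_eq0.
have W_gt0 : 0 < W := normv_gt0 _ w_neq0.
have r_ge0 : 0 <= r by rewrite divr_ge0 ?sqrtr_ge0 ?sigma_max_ge0.
have L1_ge0 : 0 <= L 1 := sigma_max_ge0 _.
have sA_ge0 : 0 <= sA := sigma_max_ge0 _.
have X_ge0 : 0 <= X.
  rewrite leNgt; apply/negP => X_lt0; move: req_z; apply/negP; rewrite -ltNge.
  apply: le_lt_trans (_ : 0 < W ^+ 2 * (2 * N)); last by rewrite !mulr_gt0 ?exprn_gt0.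
  apply: mulr_ge0_le0; first by rewrite mulr_ge0 // mulr_ge0.
  by rewrite pmulr_rle0 // ltW.
have step_N : gam * sA * W ^+ 2 * (2 * N) <= 4 * N * X.
  apply: le_trans (_ : gam * sA * (2 * r * L 1 * (2 * X)) <= _).
    by rewrite -mulrA ler_wpM2l ?mulr_ge0.
  have -> : gam * sA * (2 * r * L 1 * (2 * X)) = 4 * (r * sA * (gam * L 1)) * X by ring.
  have rsA_gamL : r * sA * (gam * L 1) <= Num.sqrt (sigma_min A).
    by apply: le_trans r_constM_sigma_max_le; rewrite ler_piMr // mulr_ge0.
  apply: le_trans (_ : 4 * Num.sqrt (sigma_min A) * X <= _).
    by rewrite ler_wpM2r // ler_wpM2l.
  by rewrite ler_wpM2r // ler_wpM2l // sqrt_sigma_min_le_normv.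
have : gam * sA * W ^+ 2 <= 2 * X.
  by rewrite -(ler_pM2r (mulr_gt0 (ltr0Sn R 1) N_gt0)); apply: le_trans step_N _; lra.
apply: le_trans; rewrite -mulrA ler_wpM2l // /W normv_sqr; exact: dotv_mulmx_le.
Qed.

Lemma g_con_descent_step_boundary k z gam : requirement2 Q q A v m ->
  g z = 1 -> 0 <= gam -> gam * L 1 <= 1 -> g (descent_step k gam z) <= 1.
Proof.
move=> req gz1 gam0 gamL.
have -> : descent_step k gam z = z + (- gam) *: w z.
  by rewrite /descent_step /grad_J /w_vec gz1 expr1n mulr1 scaleNr.
have := requirement2_step_bound z gam req gz1 gam0 gamL.
rewrite g_con_addZ gz1; nra.
Qed.

(* With [z] the boundary point on the ray from [x] along [a = A (y - v)]:
   [g y = <a, y - v> <= <a, step z - v> <= sqrt (g y * g (step z)) <= sqrt (g y)]. *)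
Lemma g_con_descent_step k x gam : (1 <= k)%N -> requirement2 Q q A v m ->
  g x <= 1 -> 0 <= gam -> gam * L k <= 1 -> gam * L 1 <= 1 ->
  g (descent_step k gam x) <= 1.
Proof.
move=> k1 req gx1 gam0 gamLk gamL1.
set y := descent_step k gam x; set a := A *m (y - v).
have gy_a : g y = dotv a (y - v) by rewrite /g_con dotvC.
have [a0|a_neq0] := eqVneq a 0; first by rewrite gy_a a0 dotv0l ler01.
have [s s0 gz1] := exists_boundary_point x a gx1 a_neq0.
have mono := dotv_descent_step_mono k gam x a s k1 gam0 gamLk gx1 s0 gz1.
have gTz := g_con_descent_step_boundary k (x + s *: a) gam req gz1 gam0 gamL1.
set Tz := descent_step k gam (x + s *: a) in mono gTz.
have CS : dotv (y - v) (A *m (Tz - v)) ^+ 2 <= g y * g Tz.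
  exact: form_CauchySchwarz.
rewrite dotv_mulmx A_sym -/a in CS.
have gy_le : g y <= dotv a (Tz - v) by rewrite gy_a (dotvBr y) (dotvBr Tz) lerD2r.
have := g_con_ge0 y; have := g_con_ge0 Tz; nra.
Qed.

Lemma sym_pd_unitmx : A \in unitmx.
Proof.
rewrite -row_free_unit; apply: inj_row_free => u uA0.
have Au0 : A *m u^T = 0 by rewrite -A_sym -trmx_mul uA0 trmx0.
apply: trmx_inj; rewrite trmx0; apply/eqP/contraT => /(A_pd.2).
by rewrite Au0 dotv0r ltxx.
Qed.

Lemma normv_grad_J_bounded :
  exists B, forall k y, (1 <= k)%N -> g y <= 1 -> normv (gradJ k y) <= B.
Proof.
set sQ := sigma_max Q; set sA := sigma_max A; set sI := sigma_max (invmx A).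
exists (sQ * (normv v + sI * Num.sqrt sA) + normv q + 2 * m * Num.sqrt sA).
move=> k y k1 gy1.
have NAd : normv (A *m (y - v)) <= Num.sqrt sA.
  apply: ler_of_sqr; first exact: sqrtr_ge0.
  rewrite [X in _ <= X]sqr_sqrtr ?sigma_max_ge0 //.
  apply: le_trans (psd_normv_mulmx_sqr _ _ A_psd) _.
  by rewrite ler_piMr ?sigma_max_ge0.
have Nd : normv (y - v) <= sI * Num.sqrt sA.
  rewrite -[y - v](mulKmx sym_pd_unitmx); apply: le_trans (normv_mulmx_le _ _) _.
  by rewrite ler_wpM2l ?sigma_max_ge0.
have NQy : normv (Q *m y) <= sQ * (normv v + sI * Num.sqrt sA).
  apply: le_trans (normv_mulmx_le _ _) _; rewrite ler_wpM2l ?sigma_max_ge0 //.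
  by rewrite -[y](subrK v) addrC (le_trans (normvD _ _)) // lerD2l.
have coef : `|m * g y ^+ k.-1| <= m.
  have gk1 : 0 <= g y ^+ k.-1 <= 1 by rewrite exprn_ge0 ?exprn_ile1 ?g_con_ge0.
  case/andP: gk1 => gk_ge0 gk_le1.
  by rewrite ger0_norm ?ler_piMr ?mulr_ge0 // ltW.
rewrite /grad_J /grad_f /grad_g; apply: le_trans (normvD _ _) _.
apply: lerD; first by apply: le_trans (normvD _ _) _; rewrite lerD2r.
rewrite !normvZ (ger0_norm (ler0n R 2)).
have := normr_ge0 (m * g y ^+ k.-1); have := normv_ge0 (A *m (y - v)); nra.
Qed.

Lemma Lk1_le k : (1 <= k)%N -> L 1 <= L k.
Proof.
move=> k1; apply: sigma_max_addZ_mono => //.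
have m_ge0 := ltW m_gt0.
apply/andP; split; first by rewrite mulr_ge0 // mulr1 subr_ge0 ler_nat.
by rewrite ler_wpM2l // lerD2r ler_wpM2l // ler1n.
Qed.

Lemma iterates_in_constraint {x : nat -> 'cV[R]_n} {gamma : nat -> R} :
  requirement2 Q q A v m -> g (x 1%N) <= 1 ->
  (forall k, (1 <= k)%N -> x k.+1 = descent_step k (gamma k) (x k)) ->
  (forall k, (1 <= k)%N -> 0 < gamma k /\ gamma k <= (L k)^-1) ->
  forall k, (1 <= k)%N -> g (x k) <= 1.
Proof.
move=> req gx1 rec steps; elim=> [//|[_ _ //|k IH] _].
have [gam_gt0 gam_le] := steps k.+1 isT.
have gamL : gamma k.+1 * L k.+1 <= 1 by rewrite mulr_le1_of_le_inv ?sigma_max_ge0.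
rewrite rec //; apply: g_con_descent_step => //; [exact: IH | exact: ltW |].
by apply: le_trans gamL; rewrite ler_wpM2l ?Lk1_le ?(ltW gam_gt0).
Qed.

End Descent.

Theorem lemma5 (R : realType) (n : nat) (Q : 'M[R]_n) (q : 'cV[R]_n)
  (A : 'M[R]_n) (v : 'cV[R]_n) (m : R) (x : nat -> 'cV[R]_n) (gamma : nat -> R) :
  sym_psd Q -> sym_pd A -> 0 < m -> requirement2 Q q A v m ->
  g_con A v (x 1%N) <= 1 ->
  (forall k, (1 <= k)%N -> x k.+1 = x k - gamma k *: grad_J Q q A v m k (x k)) ->
  (forall k, (1 <= k)%N -> 0 < gamma k /\ gamma k <= (Lk Q A m k)^-1) ->
  cvgn (fun N => \sum_(1 <= k < N) gamma k ^+ 2) ->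
  (fun N => \sum_(1 <= k < N) gamma k) @ \oo --> +oo ->
  cvgn (fun N => \sum_(1 <= k < N)
          gamma k ^+ 2 * normv (grad_J Q q A v m k (x k)) ^+ 2).
Proof.
move=> Q_psd A_pd m_gt0 req gx1 rec steps sum_gamma2 _.
have in_C := iterates_in_constraint Q_psd A_pd m_gt0 req gx1 rec steps.
have [B grad_le] := normv_grad_J_bounded (Q := Q) (q := q) (v := v) A_pd m_gt0.
apply: (is_cvg_sum_le (sqr_ge0 B) _ _ sum_gamma2) => [k k1|k _]; last exact: sqr_ge0.
have grad_ge0 := normv_ge0 (grad_J Q q A v m k (x k)).
split; first by rewrite mulr_ge0 ?sqr_ge0.
have grad_kB := grad_le _ _ k1 (in_C k k1).
rewrite mulrC ler_wpM2r ?sqr_ge0 //.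
by apply: lerXn2r; rewrite ?nnegrE // (le_trans grad_ge0 grad_kB).
Qed.
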